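(* Let $C\subseteq(\mathbb{R}^d,\operatorname{dist})$ be the attractor of an iterated function system of finitely many maps $f_i(x)=\lambda_i x+t_i$ with $\lambda_i\in(0,1)$ and $t_i\in\mathbb{R}^d$, such that $f_i(B[0,1])\subseteq B[0,1]$ for all $i$. For a word $I=i_1\cdots i_k$ let $S_I:=f_{i_1}\circ\cdots\circ f_{i_k}(B[0,1])$ (so $S_\emptyset=B[0,1]$, $S_i=B[t_i,\lambda_i]$). Then: (1) if $S_\emptyset\setminus\bigcup_i S_i\neq\emptyset$, \[h_\emptyset\le\max_{x\in S_\emptyset\setminus\bigcup_iS_i}\ \min_i\frac{\operatorname{dist}(x,t_i)-\lambda_i}{1-\lambda_i};\] (2) $\tau(C,\{S_I\}_I)\ge\frac{\min_j\lambda_j}{h_\emptyset}$; (3) the system $\{S_I\}_I$ is $(2\max_i\lambda_i+h_\emptyset)$-uniformly dense.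
   Context: $\mathbb{R}^d$ carries a distance $\operatorname{dist}$ induced by a norm; $B[x,\rho]$ is the closed ball of center $x$ and radius $\rho$. A system of balls for a compact set $C$ is a family $\{S_I\}_I$ of closed balls indexed by finite words with each $S_I$ containing its finitely many children $S_{I,j}$, $C=\bigcap_{n\ge0}\bigcup_{\ell(I)=n}S_I$, and radii tending to $0$ along every infinite branch. $h_I:=\max_{x\in S_I}\operatorname{dist}(x,C)$; thickness $\tau(C,\{S_I\}_I):=\inf_I\frac{\min_i\operatorname{rad}(S_{I,i})}{h_I}$. The system is $r$-uniformly dense if for every $I$ and every ball $B\subseteq S_I$ with $\operatorname{rad}(B)\ge r\operatorname{rad}(S_I)$ there is a child $S_{I,i}\subseteq B$. *)

From HB Require Import structures.
From mathcomp Require Import all_boot all_order all_algebra.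
From mathcomp Require Import all_classical all_reals all_analysis.
Set Implicit Arguments. Unset Strict Implicit. Unset Printing Implicit Defensive.
Import Order.TTheory GRing.Theory Num.Theory.
Import numFieldNormedType.Exports.
Local Open Scope classical_set_scope.
Local Open Scope ring_scope.

(* The ambient space is R^d = 'rV[R]_d, equipped with an ARBITRARY norm N
   (dist x y := N (x - y)).  Its topology (used for compactness of C) is the
   standard one, which all norms on R^d induce. *)
Definition is_norm (R : realType) (d : nat) (N : 'rV[R]_d -> R) : Prop :=
  [/\ (forall x, 0 <= N x),
      (forall x, N x = 0 -> x = 0),
      (forall (a : R) x, N (a *: x) = `|a| * N x) &
      (forall x y, N (x + y) <= N x + N y)].

Definition cball (R : realType) (d : nat) (N : 'rV[R]_d -> R)
  (c : 'rV[R]_d) (r : R) : set 'rV[R]_d := [set y | N (y - c) <= r].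

Definition ifs_map (R : realType) (d m : nat) (lam : 'I_m.+1 -> R)
  (t : 'I_m.+1 -> 'rV[R]_d) (i : 'I_m.+1) (x : 'rV[R]_d) : 'rV[R]_d :=
  lam i *: x + t i.

Definition is_attractor (R : realType) (d m : nat) (lam : 'I_m.+1 -> R)
  (t : 'I_m.+1 -> 'rV[R]_d) (C : set 'rV[R]_d) : Prop :=
  [/\ C !=set0, compact C &
      C = \bigcup_(i in [set: 'I_m.+1]) (ifs_map lam t i @` C)].

Definition word_map (R : realType) (d m : nat) (lam : 'I_m.+1 -> R)
  (t : 'I_m.+1 -> 'rV[R]_d) (I : seq 'I_m.+1) : 'rV[R]_d -> 'rV[R]_d :=
  foldr (fun i g => ifs_map lam t i \o g) id I.

(* S_I := f_{i_1} o ... o f_{i_k} (B[0,1]); children of S_I are S_{I j} = S (rcons I j) *)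
Definition S_ (R : realType) (d m : nat) (N : 'rV[R]_d -> R) (lam : 'I_m.+1 -> R)
  (t : 'I_m.+1 -> 'rV[R]_d) (I : seq 'I_m.+1) : set 'rV[R]_d :=
  word_map lam t I @` cball N 0 1.

(* rad(S_I): S_I is the closed ball of radius lam_{i_1} ... lam_{i_k} *)
Definition rad_ (R : realType) (m : nat) (lam : 'I_m.+1 -> R)
  (I : seq 'I_m.+1) : R := \prod_(i <- I) lam i.

Definition dist_set (R : realType) (d : nat) (N : 'rV[R]_d -> R)
  (C : set 'rV[R]_d) (x : 'rV[R]_d) : R := inf [set N (x - c) | c in C].

(* h_I := max_{x in S_I} dist(x, C)  (a max, since S_I is compact) *)
Definition h_ (R : realType) (d m : nat) (N : 'rV[R]_d -> R) (lam : 'I_m.+1 -> R)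
  (t : 'I_m.+1 -> 'rV[R]_d) (C : set 'rV[R]_d) (I : seq 'I_m.+1) : R :=
  sup [set dist_set N C x | x in S_ N lam t I].

Definition eratio (R : realType) (a h : R) : \bar R :=
  if h == 0 then +oo%E else (a / h)%:E.

Definition thickness (R : realType) (d m : nat) (N : 'rV[R]_d -> R)
  (lam : 'I_m.+1 -> R) (t : 'I_m.+1 -> 'rV[R]_d) (C : set 'rV[R]_d) : \bar R :=
  ereal_inf [set eratio (\big[Order.min/rad_ lam (rcons I ord0)]_(j < m.+1)
                            rad_ lam (rcons I j))
                        (h_ N lam t C I) | I in [set: seq 'I_m.+1]].

Definition unif_dense (R : realType) (d m : nat) (N : 'rV[R]_d -> R)
  (lam : 'I_m.+1 -> R) (t : 'I_m.+1 -> 'rV[R]_d) (r : R) : Prop :=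
  forall (I : seq 'I_m.+1) (x : 'rV[R]_d) (rho : R),
    cball N x rho `<=` S_ N lam t I -> r * rad_ lam I <= rho ->
    exists j : 'I_m.+1, S_ N lam t (rcons I j) `<=` cball N x rho.

From HB Require Import structures.
From mathcomp Require Import all_boot all_order all_algebra.
From mathcomp Require Import all_classical all_reals all_analysis.
From mathcomp Require Import lra.
Import Order.TTheory GRing.Theory Num.Theory.
Import numFieldNormedType.Exports.
Local Open Scope classical_set_scope.
Local Open Scope ring_scope.

(* The word maps are similitudes: [word_map I] is affine with ratio [rad I],
   so [dist(., C)] contracts by [rad I] along it and every [h_I] is at most
   [rad I * h_0]; this gives (2) at once.  For (3), a ball of radius
   [r * rad I] inside [S_I] pulls back to a ball of radius [r] inside [B[0,1]]
   around some [z]; some point of [C] is within [h_0] of [z] and lies in a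
   first-level ball [B[t_j, lam_j]], so [S_j] is within [2 lam_j + h_0] of [z].
   For (1), if [h_0] exceeded the bound [G], every point of [B[0,1]] would be
   within a convex combination [(1 - mu) G + mu h_0] ([mu <= max lam]) of [C]:
   points of some [S_i] because [h_i <= lam_i h_0], gap points by moving
   radially to [S_i].  Taking the supremum gives [h_0 < h_0]. *)

Section NormedSpace.
Variables (R : realType) (d : nat) (N : 'rV[R]_d -> R).
Hypothesis hN : is_norm N.

Lemma isnorm_ge0 x : 0 <= N x. Proof. by case: hN. Qed.

Lemma isnormZ a x : N (a *: x) = `|a| * N x. Proof. by case: hN. Qed.

Lemma isnormD x y : N (x + y) <= N x + N y. Proof. by case: hN. Qed.

Lemma isnorm_eq0 x : N x = 0 -> x = 0. Proof. by case: hN => _ + _ _; apply. Qed.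

Lemma isnorm0 : N 0 = 0.
Proof. by have := isnormZ 0 0; rewrite scale0r normr0 mul0r. Qed.

Lemma isnormN x : N (- x) = N x.
Proof. by rewrite -scaleN1r isnormZ normrN normr1 mul1r. Qed.

Lemma isnorm_distC x y : N (x - y) = N (y - x).
Proof. by rewrite -isnormN opprB. Qed.

Lemma isnorm_distD x y z : N (x - z) <= N (x - y) + N (y - z).
Proof. by have := isnormD (x - y) (y - z); rewrite addrA subrK. Qed.

Lemma isnormZ_ge0 a x : 0 <= a -> N (a *: x) = a * N x.
Proof. by move=> a0; rewrite isnormZ ger0_norm. Qed.

Lemma mx_norm_coord_le (x : 'rV[R]_d) j : `|x 0 j| <= `|x|.
Proof.
have -> : `|x| = mx_norm x by [].
by rewrite mx_normrE (bigD1 (0, j)) //= le_max lexx.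
Qed.

Lemma isnorm_le_mx_norm x : N x <= (\sum_(j < d) N 'e_j) * `|x|.
Proof.
rewrite {1}(row_sum_delta x).
apply: (@le_trans _ _ (\sum_(j < d) N (x 0 j *: 'e_j))).
  elim/big_ind2: _ => [|a1 a2 b1 b2 h1 h2|j _] //; first by rewrite isnorm0.
  by apply: le_trans (isnormD _ _) _; apply: lerD.
rewrite mulr_suml; apply: ler_sum => j _; rewrite isnormZ mulrC.
by apply: ler_wpM2l; [apply: isnorm_ge0 | apply: mx_norm_coord_le].
Qed.

Lemma compact_isnorm_bounded (A : set 'rV[R]_d) :
  compact A -> exists M, forall c, A c -> N c <= M.
Proof.
move=> /compact_bounded /ex_strict_bound_gt0 [M M0 AM].
exists ((\sum_(j < d) N 'e_j) * M) => c Ac.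
apply: le_trans (isnorm_le_mx_norm c) _; apply: ler_wpM2l.
  by apply: sumr_ge0 => j _; apply: isnorm_ge0.
exact: ltW (AM c Ac).
Qed.

Section DistanceToSet.
Context {C : set 'rV[R]_d}.
Local Notation D := (dist_set N C).

Lemma dist_set_le x c : C c -> D x <= N (x - c).
Proof.
by move=> Cc; apply: ge_inf; [exists 0 => _ [? _ <-]; apply: isnorm_ge0 | exists c].
Qed.

Hypothesis C0 : C !=set0.

Lemma dist_set_has_inf x : has_inf [set N (x - c) | c in C].
Proof.
have [c Cc] := C0.
by split; [exists (N (x - c)), c | exists 0 => _ [? _ <-]; apply: isnorm_ge0].
Qed.

Lemma dist_set_ge0 x : 0 <= D x.
Proof.
apply: lb_le_inf; first by case: (dist_set_has_inf x).
by move=> _ [c _ <-]; apply: isnorm_ge0.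
Qed.

Lemma dist_set_adherent x e :
  0 < e -> exists2 c, C c & N (x - c) < D x + e.
Proof.
by move=> e0; have [_ [c Cc <-] ?] := inf_adherent e0 (dist_set_has_inf x); exists c.
Qed.

Lemma dist_setD x y : D x <= N (x - y) + D y.
Proof.
apply/ler_addgt0Pr => e e0; have [c Cc yc] := dist_set_adherent y _ e0.
apply: le_trans (dist_set_le _ _ Cc) _; apply: le_trans (isnorm_distD x y c) _.
by rewrite -addrA lerD2l ltW.
Qed.

End DistanceToSet.

Section IteratedFunctionSystem.
Variables (m : nat) (lam : 'I_m.+1 -> R) (t : 'I_m.+1 -> 'rV[R]_d).
Hypothesis hlam : forall i, 0 < lam i < 1.

Let lam_gt0 i : 0 < lam i. Proof. by case/andP: (hlam i). Qed.
Let lam_lt1 i : lam i < 1. Proof. by case/andP: (hlam i). Qed.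
Let lam_ge0 i : 0 <= lam i. Proof. exact/ltW/lam_gt0. Qed.

Lemma word_map_cons i I z :
  word_map lam t (i :: I) z = lam i *: word_map lam t I z + t i.
Proof. by []. Qed.

Lemma word_map_rcons I j z :
  word_map lam t (rcons I j) z = word_map lam t I (ifs_map lam t j z).
Proof. by elim: I => [|i I IH] //=; rewrite -IH. Qed.

Lemma rad_rcons I j : rad_ lam (rcons I j) = rad_ lam I * lam j.
Proof. by rewrite /rad_ big_rcons. Qed.

Lemma rad_gt0 I : 0 < rad_ lam I.
Proof. by rewrite /rad_; elim/big_ind: _ => // *; apply: mulr_gt0. Qed.

Lemma word_map_affine I z :
  word_map lam t I z = rad_ lam I *: z + word_map lam t I 0.
Proof.
elim: I z => [|i I IH] z; first by rewrite /rad_ big_nil scale1r /= addr0.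
rewrite !word_map_cons (IH z) (IH 0) /rad_ big_cons scaler0 add0r scalerDr.
by rewrite scalerA addrA.
Qed.

Lemma word_map_dist I x y :
  N (word_map lam t I x - word_map lam t I y) = rad_ lam I * N (x - y).
Proof.
rewrite (word_map_affine I x) (word_map_affine I y) opprD addrACA subrr addr0.
by rewrite -scalerBr isnormZ_ge0 // ltW // rad_gt0.
Qed.

Lemma cball_sub_S1 i : cball N (t i) (lam i) `<=` S_ N lam t [:: i].
Proof.
move=> x hx; exists ((lam i)^-1 *: (x - t i)).
  rewrite /cball /= subr0 isnormZ_ge0; last by rewrite invr_ge0 ltW.
  by rewrite ler_pdivrMl // mulr1.
by rewrite /= /ifs_map scalerA mulfV ?gt_eqF // scale1r subrK.
Qed.

Lemma S_preimage I x : S_ N lam t I x -> exists2 z, N z <= 1 & x = word_map lam t I z.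
Proof. by case=> z; rewrite /cball /= subr0 => hz <-; exists z. Qed.

Lemma S_word_map I z : N z <= 1 -> S_ N lam t I (word_map lam t I z).
Proof. by move=> hz; exists z => //; rewrite /cball /= subr0. Qed.

Definition lam_max := \big[Order.max/lam ord0]_(i < m.+1) lam i.

Let lam_le_max i : lam i <= lam_max. Proof. exact: le_bigmax. Qed.
Let lam_max_lt1 : lam_max < 1. Proof. by apply: bigmax_lt. Qed.
Let lam_max_ge0 : 0 <= lam_max. Proof. exact: le_trans (lam_le_max ord0). Qed.

Definition gap_set :=
  cball N 0 1 `\` \bigcup_(i in [set: 'I_m.+1]) S_ N lam t [:: i].

Definition gap_ratio x i := (N (x - t i) - lam i) / (1 - lam i).

Definition gap_min x := \big[Order.min/gap_ratio x ord0]_(i < m.+1) gap_ratio x i.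

Lemma gap_min_attained x : exists i, gap_min x = gap_ratio x i.
Proof.
rewrite /gap_min; elim/big_ind: _ => [|a b [i ->] [j ->]|i _]; first by exists ord0.
  by case: (leP (gap_ratio x i) (gap_ratio x j)); [exists i | exists j].
by exists i.
Qed.

Lemma gap_set_far x i : gap_set x -> lam i < N (x - t i).
Proof.
case=> _ nS; rewrite ltNge; apply/negP => near.
by apply: nS; exists i => //; apply: cball_sub_S1.
Qed.

Lemma gap_min_gt0 x : gap_set x -> 0 < gap_min x.
Proof.
by move=> Ax; apply: lt_bigmin => [|i _]; rewrite divr_gt0 ?subr_gt0 // gap_set_far.
Qed.

Lemma gap_min_le x : gap_set x -> gap_min x <= (1 + N (t ord0)) / (1 - lam ord0).
Proof.
case=> hx _; apply: (bigmin_inf ord0) => //.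
rewrite ler_pM2r ?invr_gt0 ?subr_gt0 //.
move: hx; rewrite /cball /= subr0 => hx.
have := isnorm_distD x 0 (t ord0); rewrite subr0 add0r isnormN.
by have := lam_gt0 ord0; lra.
Qed.

Hypothesis hball : forall i, ifs_map lam t i @` cball N 0 1 `<=` cball N 0 1.

Lemma ifs_map_ball j z : N z <= 1 -> N (ifs_map lam t j z) <= 1.
Proof.
move=> hz; have := @hball j (ifs_map lam t j z).
by rewrite /cball /= !subr0; apply; exists z; rewrite /cball /= ?subr0.
Qed.

Lemma word_map_ball I z : N z <= 1 -> N (word_map lam t I z) <= 1.
Proof. by move=> hz; elim: I => [|i I IH] //=; apply: ifs_map_ball. Qed.

(* Test [B[0,1] \subset f_j^-1(B[0,1])] at the unit vector in direction [t_j]. *)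
Lemma norm_translation_le j : N (t j) <= 1 - lam j.
Proof.
have [->|t0] := eqVneq (t j) 0; first by rewrite isnorm0 subr_ge0 ltW.
have Nt0 : 0 < N (t j).
  by rewrite lt_neqAle isnorm_ge0 andbT eq_sym; apply/eqP => /isnorm_eq0; apply/eqP.
set u := (N (t j))^-1 *: t j.
have Nu : N u = 1 by rewrite isnormZ_ge0 ?mulVf ?gt_eqF // invr_ge0 ltW.
have := ifs_map_ball j u; rewrite Nu lexx => /(_ isT).
have -> : ifs_map lam t j u = (lam j / N (t j) + 1) *: t j.
  by rewrite /ifs_map scalerDl scale1r scalerA.
have ratio_ge0 : 0 <= lam j / N (t j) + 1 by rewrite addr_ge0 ?divr_ge0 ?ltW.
rewrite isnormZ_ge0 // mulrDl mulfVK ?gt_eqF // mul1r.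
by rewrite addrC lerBrDr.
Qed.

Section Attractor.
Variable C : set 'rV[R]_d.
Hypothesis hC : is_attractor lam t C.

Let Cne : C !=set0. Proof. by case: hC. Qed.
Let C_fixed : C = \bigcup_(i in [set: 'I_m.+1]) (ifs_map lam t i @` C).
Proof. by case: hC. Qed.
Local Notation D := (dist_set N C).
Local Notation h := (h_ N lam t C).

Lemma attractor_ifs_map j c : C c -> C (ifs_map lam t j c).
Proof. by move=> Cc; rewrite C_fixed; exists j => //; exists c. Qed.

Lemma attractor_word_map I c : C c -> C (word_map lam t I c).
Proof. by move=> Cc; elim: I => [|i I IH] //=; apply: attractor_ifs_map. Qed.

Lemma attractor_decomp c : C c -> exists j, exists2 c', C c' & c = ifs_map lam t j c'.
Proof. by rewrite {1}C_fixed => -[j _ [c' Cc' <-]]; exists j, c'. Qed.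

(* If [s := sup_C N > 1] then [s <= lam_j s + N (t_j) <= 1 + lam_max (s - 1) < s]. *)
Lemma attractor_sub_ball c : C c -> N c <= 1.
Proof.
case: hC => _ /compact_isnorm_bounded [M CM] _; have [c0 Cc0] := Cne.
set s := sup [set N c | c in C].
have hs : has_sup [set N c | c in C].
  by split; [exists (N c0), c0 | exists M => _ [c' Cc' <-]; apply: CM].
have Cs c' : C c' -> N c' <= s by move=> Cc'; apply: sup_upper_bound => //; exists c'.
have s_le1 : s <= 1.
  rewrite leNgt; apply/negP => s_gt1.
  have : s <= lam_max * s + 1 - lam_max.
    apply: ge_sup; first by exists (N c0), c0.
    move=> _ [c' /attractor_decomp [j [c'' Cc'' ->]] <-].
    apply: le_trans (isnormD _ _) _; rewrite isnormZ_ge0 //.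
    have := Cs _ Cc''; have := norm_translation_le j; have := lam_le_max j.
    by have := lam_gt0 j; nra.
  by have := lam_max_lt1; nra.
by move=> Cc; apply: le_trans (Cs c Cc) s_le1.
Qed.

Lemma attractor_child c : C c -> exists j, N (c - t j) <= lam j.
Proof.
case/attractor_decomp => j [c' Cc' ->]; exists j.
rewrite /ifs_map addrK isnormZ_ge0 //.
by have := attractor_sub_ball _ Cc'; have := lam_gt0 j; nra.
Qed.

Lemma dist_word_map I z : D (word_map lam t I z) <= rad_ lam I * D z.
Proof.
apply/ler_addgt0Pr => e e0; have r0 := rad_gt0 I.
have [c Cc zc] := dist_set_adherent Cne z _ (divr_gt0 e0 r0).
apply: le_trans (dist_set_le _ _ (attractor_word_map I _ Cc)) _.
rewrite word_map_dist -ler_pdivlMl // mulrDr mulKf ?gt_eqF //.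
by rewrite mulrC ltW.
Qed.

Lemma h_has_sup I : has_sup [set D x | x in S_ N lam t I].
Proof.
have [c0 Cc0] := Cne.
split.
  exists (D (word_map lam t I 0)), (word_map lam t I 0) => //.
  by apply: S_word_map; rewrite isnorm0.
exists (1 + N c0) => _ [x /S_preimage [z hz ->] <-].
apply: le_trans (dist_set_le _ _ Cc0) _.
by apply: le_trans (isnormD _ _) _; rewrite isnormN lerD2r word_map_ball.
Qed.

Lemma dist_le_h I z : N z <= 1 -> D (word_map lam t I z) <= h I.
Proof.
move=> hz; apply: sup_upper_bound; first exact: h_has_sup.
by exists (word_map lam t I z); first exact: S_word_map.
Qed.

Lemma h_le I b : (forall z, N z <= 1 -> D (word_map lam t I z) <= b) -> h I <= b.
Proof.
move=> hb; apply: ge_sup; first by case: (h_has_sup I).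
by move=> _ [x /S_preimage [z hz ->] <-]; apply: hb.
Qed.

Lemma h_ge0 I : 0 <= h I.
Proof.
apply: le_trans (dist_set_ge0 Cne (word_map lam t I 0)) (dist_le_h I 0 _).
by rewrite isnorm0.
Qed.

Lemma h_le_rad I : h I <= rad_ lam I * h [::].
Proof.
apply: h_le => z hz; apply: le_trans (dist_word_map I z) _.
by rewrite ler_pM2l ?rad_gt0 //; apply: (dist_le_h [::] _ hz).
Qed.

Lemma exists_child_near z : N z <= 1 -> exists j, N (z - t j) <= h [::] + lam j.
Proof.
move=> hz; apply: contrapT => far.
have far_j j : 0 < N (z - t j) - h [::] - lam j.
  rewrite subr_gt0 ltrBrDr addrC ltNge; apply/negP => hj; apply: far; by exists j.
set F := fun j => N (z - t j) - h [::] - lam j.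
have del0 : 0 < \big[Order.min/F ord0]_(j < m.+1) F j.
  by apply: lt_bigmin => [|i _]; apply: far_j.
have [c Cc zc] := dist_set_adherent Cne z _ del0.
have [j cj] := attractor_child _ Cc.
have Fj : \big[Order.min/F ord0]_(j < m.+1) F j <= F j by apply: bigmin_le.
have := dist_le_h [::] _ hz; have := isnorm_distD z c (t j); rewrite /F in Fj; lra.
Qed.

Theorem S_unif_dense : unif_dense N lam t (2 * lam_max + h [::]).
Proof.
move=> I x rho xI hrho; have r0 := rad_gt0 I.
have : S_ N lam t I x.
  apply: xI; rewrite /cball /= subrr isnorm0; apply: le_trans hrho.
  by rewrite mulr_ge0 ?addr_ge0 ?mulr_ge0 ?h_ge0 // ltW // rad_gt0.
case/S_preimage => z hz ->; have [j zj] := exists_child_near _ hz; exists j.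
move=> y /S_preimage [w hw ->]; rewrite /cball /= word_map_rcons word_map_dist.
apply: le_trans hrho; rewrite mulrC ler_pM2r //.
apply: le_trans (isnorm_distD _ (t j) _) _.
rewrite /ifs_map addrK isnormZ_ge0 // isnorm_distC.
have : lam j * N w <= lam j by rewrite -[X in _ <= X]mulr1 ler_wpM2l.
by have := lam_le_max j; lra.
Qed.

Theorem thickness_ge :
  (eratio (\big[Order.min/lam ord0]_(j < m.+1) lam j) (h [::]) <= thickness N lam t C)%E.
Proof.
apply: le_ereal_inf_tmp => _ [I _ <-].
set lmin := \big[Order.min/_]_(j < m.+1) lam j.
set rmin := \big[Order.min/_]_(j < m.+1) _.
have lmin0 : 0 < lmin by apply: lt_bigmin => [|i _]; apply: lam_gt0.
have r0 := rad_gt0 I.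
have rmin_ge : rad_ lam I * lmin <= rmin.
  by apply: le_bigmin => [|i _]; rewrite rad_rcons ler_pM2l // bigmin_le.
have hI := h_le_rad I; have hI0 := h_ge0 I; have h00 := h_ge0 [::].
rewrite /eratio; case: ifPn => [/eqP h0|h0]; case: ifPn => [/eqP hI_0|hI_0]; rewrite ?leey //.
  by move: hI_0; rewrite eq_le hI0 andbT (le_trans hI) // h0 mulr0.
have hIpos : 0 < h I by rewrite lt_neqAle eq_sym hI_0.
have h0pos : 0 < h [::] by rewrite lt_neqAle eq_sym h0.
rewrite lee_fin ler_pdivrMr // mulrAC ler_pdivlMr //.
have : 0 <= lmin * (rad_ lam I * h [::] - h I) by rewrite mulr_ge0 ?subr_ge0 // ltW.
have : 0 <= h [::] * (rmin - rad_ lam I * lmin) by rewrite mulr_ge0 ?subr_ge0 // ltW.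
nra.
Qed.

Lemma dist_S1 i x : S_ N lam t [:: i] x -> D x <= lam i * h [::].
Proof.
case/S_preimage => z hz ->; apply: le_trans (dist_word_map _ z) _.
by rewrite /rad_ big_seq1 ler_pM2l //; apply: (dist_le_h [::] _ hz).
Qed.

(* Move [x] radially towards [t_i] onto the boundary of [S_i]. *)
Lemma dist_radial i x :
  lam i < N (x - t i) -> D x <= N (x - t i) - lam i + lam i * h [::].
Proof.
move=> far; set n := N (x - t i); have n0 : 0 < n by apply: lt_trans far.
set y := ifs_map lam t i (n^-1 *: (x - t i)).
have Sy : S_ N lam t [:: i] y.
  exists (n^-1 *: (x - t i)) => //.
  by rewrite /cball /= subr0 isnormZ_ge0 ?mulVf ?gt_eqF // invr_ge0 ltW.
apply: le_trans (dist_setD Cne x y) _; apply: lerD; last exact: dist_S1.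
have -> : x - y = (1 - lam i / n) *: (x - t i).
  by rewrite /y /ifs_map scalerA scalerBl scale1r opprD addrA addrAC.
have : lam i / n <= 1 by rewrite ler_pdivrMr // mul1r ltW.
by move=> ?; rewrite isnormZ_ge0 ?subr_ge0 // mulrBl mul1r -mulrA mulVf ?gt_eqF ?mulr1.
Qed.

Lemma dist_le_convex_comb G z : 0 <= G -> (forall x, gap_set x -> gap_min x <= G) ->
  N z <= 1 -> exists2 mu, mu <= lam_max & D z <= (1 - mu) * G + mu * h [::].
Proof.
move=> G0 gG hz; have [Az|nAz] := pselect (gap_set z).
  have [i gi] := gap_min_attained z; exists (lam i) => //.
  apply: le_trans (dist_radial _ _ (gap_set_far _ i Az)) _.
  have -> : N (z - t i) - lam i = (1 - lam i) * gap_ratio z i.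
    by rewrite /gap_ratio mulrCA mulfV ?mulr1 // subr_eq0 eq_sym lt_eqF.
  by rewrite lerD2r ler_pM2l ?subr_gt0 // -gi gG.
have [i _ Si] : (\bigcup_(i in [set: 'I_m.+1]) S_ N lam t [:: i]) z.
  by apply: contrapT => nS; apply: nAz; split; rewrite /cball /= ?subr0.
exists (lam i) => //; apply: le_trans (dist_S1 _ _ Si) _.
by rewrite lerDr mulr_ge0 // subr_ge0 ltW.
Qed.

Theorem h0_le_sup_gap_min :
  gap_set !=set0 -> h [::] <= sup [set gap_min x | x in gap_set].
Proof.
move=> [x0 Ax0]; set G := sup _.
have hs : has_sup [set gap_min x | x in gap_set].
  split; first by exists (gap_min x0), x0.
  by exists ((1 + N (t ord0)) / (1 - lam ord0)) => _ [x Ax <-]; apply: gap_min_le.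
have gG x : gap_set x -> gap_min x <= G.
  by move=> Ax; apply: sup_upper_bound => //; exists x.
have G0 : 0 <= G by apply/ltW/(lt_le_trans (gap_min_gt0 _ Ax0))/gG.
rewrite leNgt; apply/negP => Gh.
have : h [::] <= (1 - lam_max) * G + lam_max * h [::].
  apply: h_le => z /(dist_le_convex_comb _ _ G0 gG) [mu mu_le Dz]; apply: le_trans Dz _.
  by have := ltW Gh; nra.
by have := lam_max_lt1; nra.
Qed.

End Attractor.
End IteratedFunctionSystem.
End NormedSpace.

Theorem lemma4p1 (R : realType) (d m : nat) (N : 'rV[R]_d -> R)
  (lam : 'I_m.+1 -> R) (t : 'I_m.+1 -> 'rV[R]_d) (C : set 'rV[R]_d)
  (hN : is_norm N)
  (hlam : forall i, 0 < lam i < 1)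
  (hball : forall i, ifs_map lam t i @` cball N 0 1 `<=` cball N 0 1)
  (hC : is_attractor lam t C) :
  let A := cball N 0 1 `\` \bigcup_(i in [set: 'I_m.+1]) S_ N lam t [:: i] in
  let g := fun x => \big[Order.min/((N (x - t ord0) - lam ord0) / (1 - lam ord0))]_(i < m.+1)
                      ((N (x - t i) - lam i) / (1 - lam i)) in
  let h0 := h_ N lam t C [::] in
  [/\ (A !=set0 -> h0 <= sup [set g x | x in A]),
      (eratio (\big[Order.min/lam ord0]_(j < m.+1) lam j) h0 <= thickness N lam t C)%E &
      unif_dense N lam t (2 * \big[Order.max/lam ord0]_(i < m.+1) lam i + h0)].
Proof.
by split; [apply: h0_le_sup_gap_min | apply: thickness_ge | apply: S_unif_dense].
Qed.
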